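(* Let $m,n\ge 1$, $k=\min(m,n)$, and let $M^\star\in\mathbb{R}^{m\times n}$ have singular value decomposition $M^\star=P\Sigma Q^\top$ with $P\in\mathbb{R}^{m\times k}$, $Q\in\mathbb{R}^{n\times k}$ having orthonormal columns $p_i,q_i$ and $\Sigma=\mathrm{diag}(\sigma_1,\dots,\sigma_k)$ with $\sigma_1>\sigma_2>\cdots>\sigma_k>0$. For $r\in\{1,\dots,k\}$ let $A_r=\sum_{i=1}^r\sigma_ip_iq_i^\top$, let $\Pi_S$ denote the $k\times k$ diagonal matrix with $(\Pi_S)_{ii}=1$ if $i\in S$ and $0$ otherwise, $[r]=\{1,\dots,r\}$, and for $U\in\mathbb{R}^{m\times k}$, $V\in\mathbb{R}^{n\times k}$ let $$\mathcal{E}(U,V,r)=\min_{S_r\subseteq\{1,\dots,k\},\,|S_r|=r}\bigl\|U\Pi_{S_r}V^\top-A_r\bigr\|_F^2.$$ Let $$\mathcal{M}_{\mathrm{NSL}}=\arg\min_{U\in\mathbb{R}^{m\times k},\,V\in\mathbb{R}^{n\times k}}\frac1k\sum_{r=1}^k\bigl\|U\Pi_{[r]}V^\top-M^\star\bigr\|_F^2.$$ Then for every $(U,V)\in\mathcal{M}_{\mathrm{NSL}}$ and every $r\in\{1,\dots,k\}$, $\mathcal{E}(U,V,r)=0$.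
   Context: $\|\cdot\|_F$ is the Frobenius norm. *)

From mathcomp Require Import all_boot all_order all_algebra.
From mathcomp Require Import reals.
Set Implicit Arguments. Unset Strict Implicit. Unset Printing Implicit Defensive.
Import Order.TTheory GRing.Theory Num.Theory.
Local Open Scope ring_scope.

Definition frob2 {R : realType} {m n : nat} (A : 'M[R]_(m, n)) : R :=
  \sum_(i < m) \sum_(j < n) A i j ^+ 2.

Definition PiS {R : realType} {k : nat} (S : {set 'I_k}) : 'M[R]_k :=
  diag_mx (\row_(i < k) (if i \in S then 1 else 0)).

(* [r] = {1,...,r}, i.e. 0-based indices i < r *)
Definition firstr (k r : nat) : {set 'I_k} := [set i : 'I_k | (i < r)%N].

Definition Ar {R : realType} {m n k : nat} (P : 'M[R]_(m, k)) (Q : 'M[R]_(n, k))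
  (sigma : 'I_k -> R) (r : nat) : 'M[R]_(m, n) :=
  \sum_(i < k | (i < r)%N) sigma i *: (col i P *m (col i Q)^T).

(* E(U,V,r) = min over S with |S| = r of ||U Pi_S V^T - A_r||_F^2.
   The seed of the min is the value at S = [r], itself a candidate when r <= k. *)
Definition Eerr {R : realType} {m n k : nat} (U : 'M[R]_(m, k)) (V : 'M[R]_(n, k))
  (P : 'M[R]_(m, k)) (Q : 'M[R]_(n, k)) (sigma : 'I_k -> R) (r : nat) : R :=
  \big[Num.min/frob2 (U *m PiS (firstr k r) *m V^T - Ar P Q sigma r)]_(S : {set 'I_k} | #|S| == r)
     frob2 (U *m PiS S *m V^T - Ar P Q sigma r).

Definition nsl_loss {R : realType} {m n k : nat} (M : 'M[R]_(m, n))
  (U : 'M[R]_(m, k)) (V : 'M[R]_(n, k)) : R :=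
  k%:R^-1 * \sum_(1 <= r < k.+1) frob2 (U *m PiS (firstr k r) *m V^T - M).

Definition in_M_NSL {R : realType} {m n k : nat} (M : 'M[R]_(m, n))
  (U : 'M[R]_(m, k)) (V : 'M[R]_(n, k)) : Prop :=
  forall (U' : 'M[R]_(m, k)) (V' : 'M[R]_(n, k)), nsl_loss M U V <= nsl_loss M U' V'.

(* For each r, the product U Pi_[r] V^T has rank at most r, so its range lies in
   the range of an orthogonal projection Pi of trace at most r.  Measured against
   M = P Sigma Q^T, the part of the error orthogonal to Pi is
   sum_i sigma_i^2 (1 - w_i) with weights w_i = |Pi p_i|^2 in [0, 1] of total at
   most r; since the sigma_i are positive and strictly decreasing, this is at least
   the tail sum_{i >= r} sigma_i^2, with equality only for w = 1_[r].  The pair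
   (P Sigma, Q) attains every one of these lower bounds at once, so a minimiser of
   the averaged loss attains each of them, and the equality case forces
   U Pi_[r] V^T = A_r. *)

From mathcomp Require Import all_boot all_order all_algebra.
From mathcomp Require Import reals.
From mathcomp Require Import ring lra.

Set Implicit Arguments.
Unset Strict Implicit.
Unset Printing Implicit Defensive.
Import Order.TTheory GRing.Theory Num.Theory.
Local Open Scope ring_scope.

Section Frobenius.
Variables (R : realType) (m n : nat).
Implicit Types A Y : 'M[R]_(m, n).

Lemma frob2_tr A : frob2 A = \tr (A *m A^T).
Proof.
rewrite /frob2 /mxtrace; apply: eq_bigr => i _; rewrite mxE.
by apply: eq_bigr => j _; rewrite !mxE expr2.
Qed.

Lemma frob2_ge0 A : 0 <= frob2 A.
Proof. by apply: sumr_ge0 => i _; apply: sumr_ge0 => j _; apply: sqr_ge0. Qed.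

Lemma frob2_eq0 A : (frob2 A == 0) = (A == 0).
Proof.
apply/eqP/eqP => [A0 | ->]; last first.
  by rewrite /frob2 big1 // => i _; rewrite big1 // => j _; rewrite mxE expr0n.
apply/matrixP => i j; rewrite mxE; apply/eqP; rewrite -sqrf_eq0; apply/eqP.
have row0 := psumr_eq0P (fun i _ => sumr_ge0 _ (fun j _ => sqr_ge0 (A i j))) A0.
exact: psumr_eq0P (fun j _ => sqr_ge0 (A i j)) (row0 i isT) j isT.
Qed.

Lemma frob2N A : frob2 (- A) = frob2 A.
Proof. by apply: eq_bigr => i _; apply: eq_bigr => j _; rewrite mxE sqrrN. Qed.

End Frobenius.

Definition orthoproj {R : realType} {m : nat} (Pi : 'M[R]_m) :=
  Pi^T = Pi /\ Pi *m Pi = Pi.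

Section OrthogonalProjections.
Variables (R : realType) (m : nat).
Implicit Types Pi : 'M[R]_m.

Lemma orthoproj1 : orthoproj (1%:M : 'M[R]_m).
Proof. by split; rewrite ?trmx1 ?mul1mx. Qed.

Lemma orthoprojC Pi : orthoproj Pi -> orthoproj (1%:M - Pi).
Proof.
case=> sym idem; split; first by rewrite linearB /= trmx1 sym.
by rewrite mulmxBl mul1mx mulmxBr mulmx1 idem subrr subr0.
Qed.

Lemma orthoproj_conj k (P : 'M[R]_(m, k)) (Pi : 'M[R]_k) :
  P^T *m P = 1%:M -> orthoproj Pi -> orthoproj (P *m Pi *m P^T).
Proof.
move=> hP [sym idem]; split; first by rewrite !trmx_mul trmxK sym mulmxA.
by rewrite !mulmxA -(mulmxA _ P^T) hP mulmx1 -(mulmxA P) idem.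
Qed.

Lemma frob2_orthoproj n Pi (Y : 'M[R]_(m, n)) :
  orthoproj Pi -> frob2 (Pi *m Y) = \tr (Pi *m (Y *m Y^T)).
Proof.
case=> sym idem; rewrite frob2_tr trmx_mul sym mulmxA mxtrace_mulC !mulmxA.
by rewrite -[Y^T *m Pi *m Pi]mulmxA idem mxtrace_mulC mulmxA mxtrace_mulC mulmxA.
Qed.

Lemma frob2_orthoproj_split n Pi (Y : 'M[R]_(m, n)) : orthoproj Pi ->
  frob2 Y = frob2 (Pi *m Y) + frob2 ((1%:M - Pi) *m Y).
Proof.
move=> hPi; rewrite (frob2_orthoproj Y hPi) (frob2_orthoproj Y (orthoprojC hPi)).
by rewrite -mxtraceD -mulmxDl addrC subrK mul1mx frob2_tr.
Qed.

End OrthogonalProjections.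

Section CoveringProjection.
Variables (R : realType) (m : nat).

(* One Gram-Schmidt step: add the rank-one projection onto the component of [b]
   orthogonal to the range of [Pi']. *)
Lemma orthoproj_extend (Pi' : 'M[R]_m) (b : 'cV[R]_m) : orthoproj Pi' ->
  exists Pi : 'M[R]_m,
    [/\ orthoproj Pi, Pi *m b = b, Pi *m Pi' = Pi' & \tr Pi <= \tr Pi' + 1].
Proof.
case=> sym idem; set c := b - Pi' *m b.
have Pi'c : Pi' *m c = 0 by rewrite mulmxBr mulmxA idem subrr.
have cPi' : c^T *m Pi' = 0 by rewrite -{1}sym -trmx_mul Pi'c trmx0.
set s := (c^T *m c) 0 0.
have cc : c^T *m c = s%:M by rewrite {1}[c^T *m c]mx11_scalar.
have bE : b = c + Pi' *m b by rewrite subrK.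
have cb : c^T *m b = s%:M by rewrite {1}bE mulmxDr mulmxA cPi' mul0mx addr0 cc.
have tr_cc : \tr (c *m c^T) = s by rewrite mxtrace_mulC cc mxtrace_scalar.
have [s0 | s_neq0] := eqVneq s 0.
  have c0 : c = 0 by apply/eqP; rewrite -frob2_eq0 frob2_tr tr_cc s0.
  exists Pi'; split => //; last by rewrite lerDl.
  by rewrite {2}bE c0 add0r.
exists (Pi' + s^-1 *: (c *m c^T)); split.
- split; first by rewrite linearD linearZ /= trmx_mul trmxK sym.
  rewrite mulmxDl !mulmxDr idem -!scalemxAl -!scalemxAr !mulmxA Pi'c mul0mx.
  rewrite -(mulmxA c) cPi' mulmx0 -[c *m c^T *m c]mulmxA cc mul_mx_scalar.
  by rewrite -scalemxAl scalerA mulVf // scale1r !scaler0 !add0r addr0.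
- rewrite mulmxDl -scalemxAl -mulmxA cb mul_mx_scalar scalerA mulVf // scale1r.
  by rewrite addrC -bE.
- by rewrite mulmxDl -scalemxAl -mulmxA cPi' mulmx0 scaler0 addr0.
- by rewrite mxtraceD mxtraceZ tr_cc mulVf.
Qed.

Lemma orthoproj_cover_cols k (B : 'M[R]_(m, k)) (r : nat) :
  exists Pi : 'M[R]_m, [/\ orthoproj Pi, \tr Pi <= r%:R &
    forall j : 'I_k, (j < r)%N -> Pi *m col j B = col j B].
Proof.
elim: r => [|r [Pi' [proj' tr' fix']]].
  exists 0; split => //; last by rewrite /mxtrace big1 // => i _; rewrite mxE.
  by split; rewrite ?trmx0 ?mul0mx.
have [rk | kr] := ltnP r k; last first.
  exists Pi'; split => //; first by rewrite (le_trans tr') // ler_nat.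
  by move=> j _; apply: fix'; apply: leq_trans (ltn_ord j) kr.
have [Pi [proj fix_r fix_Pi' trPi]] := orthoproj_extend (col (Ordinal rk) B) proj'.
exists Pi; split => //; first by rewrite -natr1 (le_trans trPi) // lerD2r.
move=> j; rewrite ltnS leq_eqVlt => /orP [/eqP jr | jr].
  by have -> : j = Ordinal rk by apply: val_inj.
by rewrite -(fix' j jr) mulmxA fix_Pi'.
Qed.

Lemma orthoproj_cover k (B : 'M[R]_(m, k)) (r : nat) :
  B *m PiS (firstr k r) = B ->
  exists Pi : 'M[R]_m, [/\ orthoproj Pi, \tr Pi <= r%:R & Pi *m B = B].
Proof.
move=> BPi; have [Pi [proj trPi fixPi]] := orthoproj_cover_cols B r.
exists Pi; split => //; apply/matrixP => a j.
have colj : Pi *m col j B = col j B.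
  have [//|rj] := ltnP j r; first exact: fixPi.
  suff -> : col j B = 0 by rewrite mulmx0.
  apply/matrixP => i l; rewrite !mxE -BPi /PiS mul_mx_diag !mxE /firstr inE.
  by rewrite ltnNge rj mulr0.
have := congr1 (fun v : 'cV_m => v a 0) colj.
by rewrite !mxE => <-; apply: eq_bigr => l _; rewrite !mxE.
Qed.

End CoveringProjection.

Lemma gram_diag {R : realType} {a b : nat} (A : 'M[R]_(a, b)) i :
  (A^T *m A) i i = \sum_l A l i ^+ 2.
Proof. by rewrite mxE; apply: eq_bigr => l _; rewrite !mxE expr2. Qed.

Lemma gram_diag_eq0 {R : realType} {a b : nat} (A : 'M[R]_(a, b)) i :
  (A^T *m A) i i = 0 -> forall l, A l i = 0.
Proof.
rewrite gram_diag => /psumr_eq0P sq0 l; apply/eqP; rewrite -sqrf_eq0.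
by rewrite sq0 // => l' _; apply: sqr_ge0.
Qed.

Lemma mulmx_PiSE {R : realType} {m k : nat} (B : 'M[R]_(m, k)) (S : {set 'I_k}) i j :
  (B *m PiS S) i j = if j \in S then B i j else 0.
Proof. by rewrite /PiS mul_mx_diag !mxE; case: (j \in S); rewrite ?mulr1 ?mulr0. Qed.

Lemma orthoproj_PiS {R : realType} {k : nat} (S : {set 'I_k}) :
  orthoproj (PiS S : 'M[R]_k).
Proof.
split; first by rewrite /PiS tr_diag_mx.
apply/matrixP => i j; rewrite mulmx_PiSE /PiS !mxE.
by case jS: (j \in S); case: eqP => [->|]; rewrite ?jS ?mulr0n.
Qed.

Definition proj_weight {R : realType} {m k : nat} (P : 'M[R]_(m, k)) (Pi : 'M[R]_m) i :=
  (P^T *m Pi *m P) i i.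

Section ProjectionWeights.
Variables (R : realType) (m k : nat) (P : 'M[R]_(m, k)).
Hypothesis P_orth : P^T *m P = 1%:M.

Lemma proj_weightC (Pi : 'M[R]_m) i :
  proj_weight P (1%:M - Pi) i = 1 - proj_weight P Pi i.
Proof. by rewrite /proj_weight mulmxBr mulmx1 mulmxBl P_orth !mxE eqxx. Qed.

Section Projection.
Variable Pi : 'M[R]_m.
Hypothesis Pi_proj : orthoproj Pi.

Lemma proj_weight_gram i : proj_weight P Pi i = ((Pi *m P)^T *m (Pi *m P)) i i.
Proof.
case: Pi_proj => sym idem.
by rewrite /proj_weight trmx_mul sym !mulmxA -[P^T *m Pi *m Pi]mulmxA idem.
Qed.

Lemma proj_weight_ge0 i : 0 <= proj_weight P Pi i.
Proof. by rewrite proj_weight_gram gram_diag; apply: sumr_ge0 => l _; apply: sqr_ge0. Qed.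

Lemma sum_proj_weight_le_tr : \sum_i proj_weight P Pi i <= \tr Pi.
Proof.
have PPt_proj : orthoproj (1%:M - P *m P^T).
  apply: orthoprojC; rewrite -[P in P *m _]mulmx1.
  exact: orthoproj_conj (orthoproj1 _ _).
rewrite -subr_ge0 -[X in _ - X]/(\tr (P^T *m Pi *m P)) mxtrace_mulC mulmxA.
have <- : frob2 ((1%:M - P *m P^T) *m Pi) = \tr Pi - \tr (P *m P^T *m Pi).
  by rewrite frob2_orthoproj // (proj1 Pi_proj) (proj2 Pi_proj) mulmxBl mul1mx linearB.
exact: frob2_ge0.
Qed.

Lemma proj_weight_eq0 i : proj_weight P Pi i = 0 -> forall a, (Pi *m P) a i = 0.
Proof. by rewrite proj_weight_gram; apply: gram_diag_eq0. Qed.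

End Projection.

Lemma proj_weight_le1 (Pi : 'M[R]_m) i : orthoproj Pi -> proj_weight P Pi i <= 1.
Proof.
by move=> proj; rewrite -subr_ge0 -proj_weightC; apply/proj_weight_ge0/orthoprojC.
Qed.

Lemma proj_weight_eq1 (Pi : 'M[R]_m) i : orthoproj Pi ->
  proj_weight P Pi i = 1 -> forall a, (Pi *m P) a i = P a i.
Proof.
move=> proj w1 a; apply/eqP; rewrite -subr_eq0 -opprB oppr_eq0; apply/eqP.
have := proj_weight_eq0 (orthoprojC proj) (i := i) _ a; rewrite proj_weightC w1 subrr.
by rewrite mulmxBl mul1mx !mxE => ->.
Qed.

Lemma orthoproj_mul_indicator (Pi : 'M[R]_m) (S : {set 'I_k}) : orthoproj Pi ->
  (forall i, proj_weight P Pi i = (i \in S)%:R) -> Pi *m P = P *m PiS S.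
Proof.
move=> proj w_ind; apply/matrixP => a i; rewrite mulmx_PiSE.
have := w_ind i; case: (i \in S) => wi.
  exact: proj_weight_eq1.
exact: proj_weight_eq0.
Qed.

End ProjectionWeights.

Lemma sum_indicator_ltn {R : realType} (k r : nat) : (r <= k)%N ->
  \sum_(i < k) ((i < r)%N%:R : R) = r%:R.
Proof.
move=> rk; rewrite (eq_bigr (fun i : 'I_k => if (i < r)%N then 1 else 0)).
  by rewrite -big_mkcond -(big_ord_widen _ (fun=> 1)) // sumr_const card_ord.
by move=> i _; case: ltnP.
Qed.

Section TopWeights.
Variables (R : realType) (k r : nat) (a w : 'I_k -> R) (t : R).
Hypotheses (r_le_k : (r <= k)%N) (t_gt0 : 0 < t).
Hypotheses (a_head : forall i : 'I_k, (i < r)%N -> t <= a i)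
           (a_tail : forall i : 'I_k, (r <= i)%N -> a i < t).
Hypotheses (w_ge0 : forall i, 0 <= w i) (w_le1 : forall i, w i <= 1)
           (w_sum : \sum_(i < k) w i <= r%:R).

Local Notation ind i := ((i < r)%N%:R : R).

Let gap_term_ge0 (i : 'I_k) : 0 <= (ind i - w i) * (a i - t).
Proof.
have [ir | ri] := ltnP i r.
  by apply: mulr_ge0; rewrite subr_ge0 // a_head.
rewrite add0r mulNr -mulrN opprB; apply: mulr_ge0 => //.
by rewrite subr_ge0 ltW // a_tail.
Qed.

(* Both summands on the right are nonnegative: the first because [t] separates the
   top [r] entries of [a] from the rest. *)
Let gapE : \sum_(i < k) a i * ind i - \sum_(i < k) a i * w i =
  \sum_(i < k) (ind i - w i) * (a i - t) + t * (r%:R - \sum_(i < k) w i).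
Proof.
rewrite -{1}(@sum_indicator_ltn R _ _ r_le_k) -!sumrB mulr_sumr -big_split /=.
by apply: eq_bigr => i _; ring.
Qed.

Lemma top_weighted_sum_le : \sum_(i < k) a i * w i <= \sum_(i < k) a i * ind i.
Proof.
rewrite -subr_ge0 gapE; apply: addr_ge0; first by apply: sumr_ge0 => i _.
by apply: mulr_ge0; [exact: ltW | rewrite subr_ge0].
Qed.

Lemma top_weighted_sum_eq :
  \sum_(i < k) a i * ind i <= \sum_(i < k) a i * w i -> forall i, w i = ind i.
Proof.
move=> le_sum.
have : \sum_(i < k) a i * ind i - \sum_(i < k) a i * w i = 0.
  by apply/eqP; rewrite eq_le subr_le0 le_sum subr_ge0 top_weighted_sum_le.
rewrite gapE => /eqP; rewrite paddr_eq0; first last.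
- by apply: mulr_ge0; [exact: ltW | rewrite subr_ge0].
- by apply: sumr_ge0 => i _.
case/andP => /eqP terms0; rewrite mulf_eq0 (gt_eqF t_gt0) subr_eq0 => /eqP sum_w.
have tail0 (i : 'I_k) : (r <= i)%N -> w i = 0.
  move=> ri; move/eqP: (psumr_eq0P (fun j _ => gap_term_ge0 j) terms0 (i := i) isT).
  rewrite mulf_eq0 ltnNge ri sub0r oppr_eq0 subr_eq0 => /orP [/eqP //|].
  by rewrite (lt_eqF (a_tail ri)).
have : \sum_(i < k) (ind i - w i) = 0 by rewrite sumrB -sum_w sum_indicator_ltn ?subrr.
move/psumr_eq0P => ind_w i; apply/eqP; rewrite eq_sym -subr_eq0; apply/eqP.
apply: ind_w => // j _; have [jr | rj] := ltnP j r; first by rewrite subr_ge0.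
by rewrite tail0 ?subrr.
Qed.

End TopWeights.

Definition svd_tail {R : realType} {k : nat} (sigma : 'I_k -> R) (r : nat) : R :=
  \sum_i sigma i ^+ 2 - \sum_i sigma i ^+ 2 * (i < r)%N%:R.

Section SVD.
Variables (R : realType) (m n k : nat).
Variables (P : 'M[R]_(m, k)) (Q : 'M[R]_(n, k)) (sigma : 'I_k -> R).
Hypotheses (P_orth : P^T *m P = 1%:M) (Q_orth : Q^T *m Q = 1%:M).

Local Notation Sigma := (diag_mx (\row_i sigma i)).
Local Notation M := (P *m Sigma *m Q^T).

Lemma frob2_orthoproj_svd (Pi : 'M[R]_m) : orthoproj Pi ->
  frob2 (Pi *m M) = \sum_i sigma i ^+ 2 * proj_weight P Pi i.
Proof.
move=> proj; rewrite frob2_orthoproj // !trmx_mul trmxK tr_diag_mx.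
have -> : M *m (Q *m (Sigma *m P^T)) = P *m Sigma *m Sigma *m P^T.
  by rewrite -!mulmxA (mulmxA Q^T) Q_orth mul1mx.
rewrite mulmxA mxtrace_mulC !mulmxA; apply: eq_bigr => i _.
by rewrite /proj_weight mul_mx_diag mxE mul_mx_diag !mxE -mulrA -expr2 mulrC.
Qed.

Lemma frob2_svd : frob2 M = \sum_i sigma i ^+ 2.
Proof.
rewrite -[M]mul1mx (frob2_orthoproj_svd (orthoproj1 _ _)).
by apply: eq_bigr => i _; rewrite /proj_weight mulmx1 P_orth mxE eqxx mulr1.
Qed.

Lemma frob2_orthoprojC_svd (Pi : 'M[R]_m) : orthoproj Pi ->
  frob2 ((1%:M - Pi) *m M) =
    \sum_i sigma i ^+ 2 - \sum_i sigma i ^+ 2 * proj_weight P Pi i.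
Proof.
move=> proj; rewrite -frob2_svd (frob2_orthoproj_split M proj).
by rewrite (frob2_orthoproj_svd proj) addrAC subrr add0r.
Qed.

Lemma Ar_svd r : Ar P Q sigma r = P *m PiS (firstr k r) *m Sigma *m Q^T.
Proof.
apply/matrixP => a b; rewrite /Ar summxE !mxE big_mkcond /=; apply: eq_bigr => i _.
rewrite mul_mx_diag [X in _ = X * _]mxE mulmx_PiSE /firstr inE.
case: ifP => _; last by rewrite !mul0r.
by rewrite !mxE big_ord1 !mxE; ring.
Qed.

Lemma frob2_trunc_svd r :
  frob2 (P *m Sigma *m PiS (firstr k r) *m Q^T - M) = svd_tail sigma r.
Proof.
set Pi := P *m PiS (firstr k r) *m P^T.
have proj : orthoproj Pi by apply: orthoproj_conj (orthoproj_PiS _).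
have -> : P *m Sigma *m PiS (firstr k r) *m Q^T - M = - ((1%:M - Pi) *m M).
  rewrite mulmxBl mul1mx opprB /Pi !mulmxA -(mulmxA _ P^T) P_orth mulmx1.
  by rewrite -(mulmxA P Sigma) /PiS diag_mxC mulmxA.
rewrite frob2N frob2_orthoprojC_svd //; congr (_ - _); apply: eq_bigr => i _.
rewrite /proj_weight /Pi !mulmxA P_orth mul1mx -mulmxA P_orth mulmx1.
by rewrite !mxE eqxx mulr1n /firstr inE; case: (i < r)%N.
Qed.

Lemma frob2_sub_svd_split (X : 'M[R]_(m, n)) (Pi : 'M[R]_m) :
  orthoproj Pi -> Pi *m X = X ->
  frob2 (X - M) = frob2 (Pi *m (X - M)) +
    (\sum_i sigma i ^+ 2 - \sum_i sigma i ^+ 2 * proj_weight P Pi i).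
Proof.
move=> proj PiX; rewrite (frob2_orthoproj_split _ proj) -frob2_orthoprojC_svd //.
congr (_ + _); rewrite -frob2N; congr frob2.
by rewrite mulmxBr mulmxBl mul1mx PiX subrr sub0r opprK.
Qed.

Lemma trunc_orthoproj (U : 'M[R]_(m, k)) (V : 'M[R]_(n, k)) r :
  exists Pi : 'M[R]_m, [/\ orthoproj Pi, \tr Pi <= r%:R &
    Pi *m (U *m PiS (firstr k r) *m V^T) = U *m PiS (firstr k r) *m V^T].
Proof.
have idem : U *m PiS (firstr k r) *m PiS (firstr k r) = U *m PiS (firstr k r).
  by rewrite -mulmxA (proj2 (orthoproj_PiS _)).
have [Pi [proj trPi PiB]] := orthoproj_cover idem.
by exists Pi; split; rewrite // mulmxA PiB.
Qed.

Hypotheses (sigma_decr : forall i j : 'I_k, (i < j)%N -> sigma j < sigma i)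
           (sigma_gt0 : forall i : 'I_k, 0 < sigma i).

Variable r : nat.
Hypothesis r_range : (0 < r <= k)%N.

Let pred_r_lt_k : (r.-1 < k)%N.
Proof. by case/andP: r_range => r_gt0 r_le_k; rewrite prednK. Qed.

Let pivot := sigma (Ordinal pred_r_lt_k) ^+ 2.

Let sigma_sqr_lt (i j : 'I_k) : (i < j)%N -> sigma j ^+ 2 < sigma i ^+ 2.
Proof. by move=> ij; rewrite !expr2 ltr_pM ?ltW ?sigma_decr. Qed.

Let pivot_gt0 : 0 < pivot.
Proof. exact: exprn_gt0. Qed.

Let pivot_head (i : 'I_k) : (i < r)%N -> pivot <= sigma i ^+ 2.
Proof.
case/andP: r_range => r_gt0 _; rewrite -(prednK r_gt0) ltnS leq_eqVlt.
case/orP => [ir | ir]; last exact/ltW/sigma_sqr_lt.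
by have -> : i = Ordinal pred_r_lt_k by apply: val_inj; exact/eqP.
Qed.

Let pivot_tail (i : 'I_k) : (r <= i)%N -> sigma i ^+ 2 < pivot.
Proof.
by case/andP: r_range => r_gt0 _ ri; apply: sigma_sqr_lt; rewrite /= prednK.
Qed.

Let proj_weight_top (Pi : 'M[R]_m) : orthoproj Pi -> \tr Pi <= r%:R ->
  let a i := sigma i ^+ 2 in let w := proj_weight P Pi in
  \sum_i a i * w i <= \sum_i a i * (i < r)%N%:R /\
  (\sum_i a i * (i < r)%N%:R <= \sum_i a i * w i -> forall i, w i = (i < r)%N%:R).
Proof.
move=> proj trPi a w; have r_le_k : (r <= k)%N by case/andP: r_range.
have w_ge0 i : 0 <= w i by apply: proj_weight_ge0.
have w_le1 i : w i <= 1 by apply: proj_weight_le1.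
have w_sum : \sum_i w i <= r%:R.
  exact: le_trans (sum_proj_weight_le_tr P_orth proj) trPi.
have top_le := top_weighted_sum_le r_le_k pivot_gt0 pivot_head pivot_tail w_ge0 w_le1 w_sum.
have top_eq := top_weighted_sum_eq r_le_k pivot_gt0 pivot_head pivot_tail w_ge0 w_le1 w_sum.
by split.
Qed.

Lemma svd_tail_le_trunc (U : 'M[R]_(m, k)) (V : 'M[R]_(n, k)) :
  svd_tail sigma r <= frob2 (U *m PiS (firstr k r) *m V^T - M).
Proof.
have [Pi [proj trPi PiX]] := trunc_orthoproj U V r.
rewrite (frob2_sub_svd_split proj PiX) /svd_tail.
have [le_top _] := proj_weight_top proj trPi.
have := frob2_ge0 (Pi *m (U *m PiS (firstr k r) *m V^T - M)); lra.
Qed.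

Lemma trunc_eq_Ar (U : 'M[R]_(m, k)) (V : 'M[R]_(n, k)) :
  frob2 (U *m PiS (firstr k r) *m V^T - M) <= svd_tail sigma r ->
  U *m PiS (firstr k r) *m V^T = Ar P Q sigma r.
Proof.
have [Pi [proj trPi PiX]] := trunc_orthoproj U V r.
set X := U *m PiS (firstr k r) *m V^T in PiX *.
rewrite (frob2_sub_svd_split proj PiX) /svd_tail => le_tail.
have [le_top eq_top] := proj_weight_top proj trPi.
have res_ge0 := frob2_ge0 (Pi *m (X - M)).
have w_ind : forall i, proj_weight P Pi i = (i \in firstr k r)%:R.
  by move=> i; rewrite inE; apply: eq_top; lra.
have /eqP : frob2 (Pi *m (X - M)) = 0 by lra.
rewrite frob2_eq0 mulmxBr PiX subr_eq0 => /eqP ->.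
by rewrite Ar_svd !mulmxA (orthoproj_mul_indicator P_orth proj w_ind).
Qed.

End SVD.

Lemma sum_le_termwise_eq {R : realType} (a b : nat) (f g : nat -> R) :
  (forall i, (a <= i < b)%N -> g i <= f i) ->
  \sum_(a <= i < b) f i <= \sum_(a <= i < b) g i ->
  forall i, (a <= i < b)%N -> f i = g i.
Proof.
move=> g_le_f sum_le i /andP [ai ib]; apply/eqP; rewrite -subr_eq0; apply/eqP.
have diff_ge0 (j : 'I_b) : (a <= j)%N -> 0 <= f j - g j.
  by move=> aj; rewrite subr_ge0 g_le_f // aj ltn_ord.
have : \sum_(a <= j < b) (f j - g j) = 0.
  apply/eqP; rewrite eq_le; apply/andP; split; first by rewrite sumrB subr_le0.
  by rewrite big_nat_cond; apply: sumr_ge0 => j /andP [j_range _]; rewrite subr_ge0 g_le_f.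
rewrite big_geq_mkord => sum0.
exact: (psumr_eq0P (fun j => diff_ge0 j) sum0 (i := Ordinal ib) ai).
Qed.

Lemma Eerr_eq0 {R : realType} {m n k : nat} (U : 'M[R]_(m, k)) (V : 'M[R]_(n, k))
  (P : 'M[R]_(m, k)) (Q : 'M[R]_(n, k)) (sigma : 'I_k -> R) (r : nat) :
  U *m PiS (firstr k r) *m V^T = Ar P Q sigma r -> Eerr U V P Q sigma r = 0.
Proof.
have frob2_0 : frob2 (0 : 'M[R]_(m, n)) = 0 by apply/eqP; rewrite frob2_eq0.
move=> UV_Ar; rewrite /Eerr UV_Ar subrr frob2_0.
apply/eqP; rewrite eq_le; apply/andP; split.
  by apply: (big_rec (fun x => x <= 0)) => // S x _ x_le0; rewrite ge_min x_le0 orbT.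
apply: (big_ind (fun x => 0 <= x)) => // [x y x0 y0 | S _].
  by rewrite le_min x0 y0.
exact: frob2_ge0.
Qed.

Theorem theorem4p3 (R : realType) (m n : nat) (hm : (1 <= m)%N) (hn : (1 <= n)%N)
  (Mstar : 'M[R]_(m, n)) (P : 'M[R]_(m, minn m n)) (Q : 'M[R]_(n, minn m n))
  (sigma : 'I_(minn m n) -> R)
  (hP : P^T *m P = 1%:M) (hQ : Q^T *m Q = 1%:M)
  (hdec : forall i j : 'I_(minn m n), (i < j)%N -> sigma j < sigma i)
  (hpos : forall i : 'I_(minn m n), 0 < sigma i)
  (hsvd : Mstar = P *m diag_mx (\row_i sigma i) *m Q^T)
  (U : 'M[R]_(m, minn m n)) (V : 'M[R]_(n, minn m n))
  (hUV : in_M_NSL Mstar U V) :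
  forall r : nat, (1 <= r <= minn m n)%N -> Eerr U V P Q sigma r = 0.
Proof.
move=> r r_range; set k := minn m n in P Q sigma hP hQ hdec hpos hsvd U V hUV r_range *.
have k_gt0 : (0 < k)%N by case/andP: r_range; apply: leq_trans.
pose err s := frob2 (U *m PiS (firstr k s) *m V^T - Mstar).
have tail_le_err s : (1 <= s < k.+1)%N -> svd_tail sigma s <= err s.
  by move=> s_range; rewrite /err hsvd svd_tail_le_trunc.
have sum_err_le : \sum_(1 <= s < k.+1) err s <= \sum_(1 <= s < k.+1) svd_tail sigma s.
  have := hUV (P *m diag_mx (\row_i sigma i)) Q.
  rewrite /nsl_loss ler_pM2l ?invr_gt0 ?ltr0n //; congr (_ <= _).
  by apply: eq_bigr => s _; rewrite hsvd frob2_trunc_svd.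
apply/Eerr_eq0/(trunc_eq_Ar hP hQ hdec hpos r_range); rewrite -hsvd.
by have := sum_le_termwise_eq tail_le_err sum_err_le r_range; rewrite /err => ->.
Qed.
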